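(* Let $\varphi$ be a Schwartz function on $\mathbb{R}$ such that $d=\operatorname{dist}(\operatorname{supp}\hat\varphi,0)>0$, and let $p$ be a polynomial of degree $n$. Then there is a constant $C>0$ (depending on $\varphi$ and $p$) such that \[ |p(x)(\varphi\ast P_y)(x)|\le C(1+y^n)\frac{e^{-2\pi dy}}{y^{1/2}},\qquad x\in\mathbb{R},\ y>0. \]
   Context: $P_y(t)=\frac{1}{\pi}\frac{y}{t^2+y^2}$ is the Poisson kernel of the upper half plane, and $\hat\varphi(\xi)=\int\varphi(x)e^{-2\pi ix\xi}dx$. *)

From Stdlib Require Import Reals.
From Coquelicot Require Import Coquelicot.
Open Scope R_scope.

Definition cexpi (t : R) : C := (cos t, sin t).

Definition is_schwartz (f : R -> C) : Prop :=
  exists D : nat -> R -> C,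
    D 0%nat = f /\
    (forall (k : nat) (x : R), is_derive (V := C_R_NormedModule) (D k) x (D (S k) x)) /\
    (forall k m : nat, exists M : R, forall x : R, Rabs (x ^ m) * Cmod (D k x) <= M).

Definition int_R (f : R -> C) : C :=
  RInt_gen (V := C_R_CompleteNormedModule) f (Rbar_locally m_infty) (Rbar_locally p_infty).

Definition fourier (f : R -> C) (xi : R) : C :=
  int_R (fun x => Cmult (f x) (cexpi (- (2 * PI * x * xi)))).

Definition support (g : R -> C) (xi : R) : Prop :=
  forall e : R, 0 < e -> exists eta : R, Rabs (eta - xi) < e /\ g eta <> 0%C.

Definition dist_to_0 (S : R -> Prop) (d : R) : Prop :=
  (forall xi, S xi -> d <= Rabs xi) /\
  (forall e : R, 0 < e -> exists xi, S xi /\ Rabs xi < d + e).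

Definition poisson (y t : R) : R := / PI * (y / (t ^ 2 + y ^ 2)).

Definition conv_poisson (f : R -> C) (y x : R) : C :=
  int_R (fun t => Cmult (f (x - t)) (RtoC (poisson y t))).

Definition poly_eval (a : nat -> C) (n : nat) (x : R) : C :=
  sum_n (fun k => Cmult (a k) (RtoC (x ^ k))) n.

(* Write w = x + i y and w' = x - i y. Partial fractions turn (phi * P_y)(x) into
   (F phi w - F phi w') / (2 pi i), where F psi w = int psi(s) / (s - w) ds is the Cauchy
   transform. Since hat phi vanishes on (-d, d), so do the Fourier transforms of all s^j phi;
   in particular every moment int s^j phi vanishes, whence w^k F phi w = F (s^k phi) w, and
   |x| <= |w| reduces the claim to |F psi w| <= C e^{-2 pi d y} / sqrt y for rapidly
   decreasing psi with hat psi = 0 on (-d, d).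
   For this, let sigma be the sign of Im w and
     G(u) = int psi(s) e^{-2 pi i sigma (s - w) u} / (s - w) ds.
   Then G(0) = F psi w, and G'(u) is a multiple of hat psi(sigma u), so G is constant on
   [0, d]; finally |G(d)| <= e^{-2 pi d y} int |psi(s)| / |s - w| ds <= C e^{-2 pi d y} / sqrt y
   by AM-GM with weight sqrt y. Differentiation under the integral sign is replaced by
   second-order Taylor bounds: a function whose increments are O(h^2) is constant. *)

From Stdlib Require Import Reals.
From Coquelicot Require Import Coquelicot.
Open Scope R_scope.
From Stdlib Require Import Lra Lia Psatz FunctionalExtensionality.

(** * Continuity of complex-valued functions *)

Definition Ccontinuous (f : R -> C) : Prop :=
  forall s, continuous (U := C_R_NormedModule) f s.

Lemma Ccontinuous_intro (f : R -> C) :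
  (forall s, continuous (fun t => Re (f t)) s) ->
  (forall s, continuous (fun t => Im (f t)) s) -> Ccontinuous f.
Proof.
  intros H1 H2 s. apply filterlim_locally. intros eps.
  generalize (filter_and _ _ (proj1 (filterlim_locally _ _) (H1 s) eps)
                              (proj1 (filterlim_locally _ _) (H2 s) eps)).
  apply filter_imp. intros t [Ht1 Ht2].
  destruct (f t), (f s). split; assumption.
Qed.

Lemma Ccontinuous_Re (f : R -> C) s : Ccontinuous f -> continuous (fun t => Re (f t)) s.
Proof.
  intros Hf. apply filterlim_locally. intros eps.
  generalize (proj1 (filterlim_locally _ _) (Hf s) eps).
  apply filter_imp. intros t [Ht _]. exact Ht.
Qed.

Lemma Ccontinuous_Im (f : R -> C) s : Ccontinuous f -> continuous (fun t => Im (f t)) s.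
Proof.
  intros Hf. apply filterlim_locally. intros eps.
  generalize (proj1 (filterlim_locally _ _) (Hf s) eps).
  apply filter_imp. intros t [_ Ht]. exact Ht.
Qed.

Lemma Ccontinuous_pair (u v : R -> R) :
  (forall s, continuous u s) -> (forall s, continuous v s) -> Ccontinuous (fun s => (u s, v s)).
Proof. intros Hu Hv. apply Ccontinuous_intro; assumption. Qed.

Lemma Ccontinuous_const (c : C) : Ccontinuous (fun _ => c).
Proof. intros s. apply continuous_const. Qed.

Lemma Ccontinuous_RtoC (u : R -> R) :
  (forall s, continuous u s) -> Ccontinuous (fun s => RtoC (u s)).
Proof. intros Hu. apply Ccontinuous_pair; [assumption | intros; apply continuous_const]. Qed.

Lemma Ccontinuous_plus (f g : R -> C) :
  Ccontinuous f -> Ccontinuous g -> Ccontinuous (fun s => f s + g s)%C.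
Proof.
  intros Hf Hg. apply Ccontinuous_intro; intros s.
  - apply (continuous_plus (V := R_NormedModule) (fun t => Re (f t)) (fun t => Re (g t)));
      apply Ccontinuous_Re; assumption.
  - apply (continuous_plus (V := R_NormedModule) (fun t => Im (f t)) (fun t => Im (g t)));
      apply Ccontinuous_Im; assumption.
Qed.

Lemma Ccontinuous_minus (f g : R -> C) :
  Ccontinuous f -> Ccontinuous g -> Ccontinuous (fun s => f s - g s)%C.
Proof.
  intros Hf Hg. apply Ccontinuous_intro; intros s.
  - apply (continuous_minus (V := R_NormedModule) (fun t => Re (f t)) (fun t => Re (g t)));
      apply Ccontinuous_Re; assumption.
  - apply (continuous_minus (V := R_NormedModule) (fun t => Im (f t)) (fun t => Im (g t)));
      apply Ccontinuous_Im; assumption.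
Qed.

Lemma Ccontinuous_mult (f g : R -> C) :
  Ccontinuous f -> Ccontinuous g -> Ccontinuous (fun s => f s * g s)%C.
Proof.
  intros Hf Hg.
  assert (Hmul : forall u v : R -> R, forall s, continuous u s -> continuous v s ->
                 continuous (fun t => u t * v t) s)
    by (intros u v s; apply (continuous_mult (K := R_AbsRing))).
  assert (Hfr := fun s => Ccontinuous_Re f s Hf). assert (Hfi := fun s => Ccontinuous_Im f s Hf).
  assert (Hgr := fun s => Ccontinuous_Re g s Hg). assert (Hgi := fun s => Ccontinuous_Im g s Hg).
  apply Ccontinuous_intro; intros s.
  - apply (continuous_minus (V := R_NormedModule) (fun t => Re (f t) * Re (g t))
                                                  (fun t => Im (f t) * Im (g t)));
      apply Hmul; auto.
  - apply (continuous_plus (V := R_NormedModule) (fun t => Re (f t) * Im (g t))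
                                                 (fun t => Im (f t) * Re (g t)));
      apply Hmul; auto.
Qed.

Lemma Ccontinuous_inv (f : R -> C) :
  Ccontinuous f -> (forall s, f s <> 0%C) -> Ccontinuous (fun s => / f s)%C.
Proof.
  intros Hf Hnz.
  set (n := fun t => Re (f t) ^ 2 + Im (f t) ^ 2).
  assert (Hsq : forall (u : R -> R) s, continuous u s -> continuous (fun t => u t ^ 2) s).
  { intros u s Hu. apply (continuous_comp u (fun z => z ^ 2)); [assumption |].
    apply (ex_derive_continuous (K := R_AbsRing) (V := R_NormedModule)). auto_derive. auto. }
  assert (Hn : forall s, continuous (fun t => / n t) s).
  { intros s. apply continuous_Rinv_comp.
    - apply (continuous_plus (V := R_NormedModule) (fun t => Re (f t) ^ 2) (fun t => Im (f t) ^ 2));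
        apply Hsq; [apply Ccontinuous_Re | apply Ccontinuous_Im]; assumption.
    - intros Hs. apply (Hnz s). unfold n in Hs. destruct (f s) as [p q]; simpl in Hs.
      apply injective_projections; simpl; nra. }
  apply Ccontinuous_intro; intros s.
  - apply (continuous_mult (K := R_AbsRing) (fun t => Re (f t)) (fun t => / n t));
      [apply Ccontinuous_Re; assumption | apply Hn].
  - apply (continuous_mult (K := R_AbsRing) (fun t => - Im (f t)) (fun t => / n t));
      [apply (continuous_opp (V := R_NormedModule)), Ccontinuous_Im; assumption | apply Hn].
Qed.

Lemma Ccontinuous_comp (f : R -> C) (u : R -> R) :
  Ccontinuous f -> (forall s, continuous u s) -> Ccontinuous (fun s => f (u s)).
Proof. intros Hf Hu s. apply continuous_comp; [apply Hu | apply Hf]. Qed.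

(** * Integrals over the real line *)

Local Notation CV := C_R_CompleteNormedModule.

Definition sq_bounded (f : R -> C) (M : R) : Prop :=
  forall s, Cmod (f s) * (1 + s ^ 2) <= M.

Definition sq_decay (f : R -> C) : Prop :=
  Ccontinuous f /\ exists M, sq_bounded f M.

Lemma sq_bounded_ge0 (f : R -> C) M : sq_bounded f M -> 0 <= M.
Proof. intros H. generalize (H 0) (Cmod_ge_0 (f 0)). simpl. nra. Qed.

Lemma sq_bounded_pt (f : R -> C) M s : sq_bounded f M -> Cmod (f s) <= M / (1 + s ^ 2).
Proof.
  intros H. assert (0 < 1 + s ^ 2) by nra.
  apply Rmult_le_reg_r with (1 + s ^ 2); [assumption |].
  unfold Rdiv. rewrite Rmult_assoc, Rinv_l, Rmult_1_r by lra. apply H.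
Qed.

Lemma ex_RInt_Ccontinuous (f : R -> C) a b : Ccontinuous f -> ex_RInt (V := CV) f a b.
Proof. intros Hf. apply ex_RInt_continuous. intros s _. apply Hf. Qed.

Lemma Cmod_RInt_le_antiderivative (f : R -> C) (g G : R -> R) a b :
  a <= b -> Ccontinuous f ->
  (forall s, a <= s <= b -> is_derive G s (g s) /\ continuous g s /\ Cmod (f s) <= g s) ->
  Cmod (RInt (V := CV) f a b) <= G b - G a.
Proof.
  intros Hab Hf H. rewrite Cmod_norm.
  apply (norm_RInt_le (V := CV) f g a b);
    [assumption | | apply RInt_correct, ex_RInt_Ccontinuous, Hf |].
  - intros s Hs. rewrite <- Cmod_norm. apply H, Hs.
  - apply (is_RInt_derive (V := R_CompleteNormedModule));
      rewrite Rmin_left, Rmax_right by lra; intros s Hs; apply H, Hs.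
Qed.

Lemma Cmod_RInt_sq_bounded (f : R -> C) M a b :
  a <= b -> Ccontinuous f -> sq_bounded f M -> Cmod (RInt (V := CV) f a b) <= PI * M.
Proof.
  intros Hab Hf HM. assert (HM0 := sq_bounded_ge0 f M HM).
  apply Rle_trans with (M * atan b - M * atan a).
  - apply (Cmod_RInt_le_antiderivative f (fun s => M / (1 + s ^ 2)) (fun s => M * atan s));
      [assumption.. |].
    intros s _. split; [| split].
    + auto_derive; [nra | field; nra].
    + apply (ex_derive_continuous (K := R_AbsRing) (V := R_NormedModule)). auto_derive. nra.
    + apply sq_bounded_pt, HM.
  - generalize (atan_bound a) (atan_bound b). nra.
Qed.

Lemma Cmod_RInt_swap (f : R -> C) a b :
  Ccontinuous f -> Cmod (RInt (V := CV) f a b) = Cmod (RInt (V := CV) f b a).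
Proof.
  intros Hf. rewrite <- (opp_RInt_swap (V := CV)) by apply ex_RInt_Ccontinuous, Hf.
  rewrite !Cmod_norm. apply (norm_opp (V := CV)).
Qed.

Lemma Cmod_RInt_tail (f : R -> C) M N p q :
  1 <= N -> Ccontinuous f -> sq_bounded f M ->
  (N <= p /\ N <= q) \/ (p <= - N /\ q <= - N) -> Cmod (RInt (V := CV) f p q) <= M / N.
Proof.
  intros HN Hf HM Hpq. assert (HM0 := sq_bounded_ge0 f M HM).
  assert (Hmain : forall p q, p <= q -> (N <= p /\ N <= q) \/ (p <= - N /\ q <= - N) ->
                  Cmod (RInt (V := CV) f p q) <= M / N).
  { clear p q Hpq. intros p q Hle Hpq.
    assert (H0 : forall s, p <= s <= q -> s <> 0) by (intros s Hs; lra).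
    apply Rle_trans with (- M / q - - M / p).
    - apply (Cmod_RInt_le_antiderivative f (fun s => M / s ^ 2) (fun s => - M / s));
        [assumption.. |].
      intros s Hs. specialize (H0 s Hs). split; [| split].
      + auto_derive; [assumption | field; assumption].
      + apply (ex_derive_continuous (K := R_AbsRing) (V := R_NormedModule)). auto_derive.
        intros Hz. apply H0. nra.
      + eapply Rle_trans; [apply sq_bounded_pt, HM |].
        apply Rmult_le_compat_l; [assumption |]. apply Rinv_le_contravar; nra.
    - replace (- M / q - - M / p) with (M * (/ p - / q)) by (field; lra).
      replace (M / N) with (M * / N) by reflexivity.
      apply Rmult_le_compat_l; [assumption |].
      destruct Hpq as [[Hp Hq] | [Hp Hq]].
      + assert (0 < / q) by (apply Rinv_0_lt_compat; lra).
        assert (/ p <= / N) by (apply Rinv_le_contravar; lra). lra.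
      + assert (/ p < 0) by (apply Rinv_lt_0_compat; lra).
        assert (- / q <= / N).
        { rewrite <- Rinv_opp. apply Rinv_le_contravar; lra. }
        lra. }
  destruct (Rle_dec p q) as [Hle | Hlt].
  - apply Hmain; assumption.
  - rewrite Cmod_RInt_swap by assumption. apply Hmain; [lra | tauto].
Qed.

Lemma RInt_sub_tails (f : R -> C) a b a' b' : Ccontinuous f ->
  (RInt (V := CV) f a' b' - RInt (V := CV) f a b)%C =
  (RInt (V := CV) f a' a + RInt (V := CV) f b b')%C.
Proof.
  intros Hf.
  rewrite <- (RInt_Chasles (V := CV) f a' a b') by apply ex_RInt_Ccontinuous, Hf.
  rewrite <- (RInt_Chasles (V := CV) f a b b') by apply ex_RInt_Ccontinuous, Hf.
  repeat change (plus ?x ?y) with (Cplus x y). ring.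
Qed.

Lemma ex_RInt_gen_sq_decay (f : R -> C) :
  sq_decay f -> ex_RInt_gen (V := CV) f (Rbar_locally m_infty) (Rbar_locally p_infty).
Proof.
  intros [Hf [M HM]]. assert (HM0 := sq_bounded_ge0 f M HM).
  assert (Hprop : ProperFilter (filter_prod (Rbar_locally m_infty) (Rbar_locally p_infty)))
    by (apply filter_prod_proper; apply Rbar_locally_filter).
  destruct (proj1 (filterlim_locally_cauchy (U := CV) (F := filter_prod _ _)
                     (fun ab => RInt (V := CV) f (fst ab) (snd ab)))) as [l Hl].
  - intros eps. assert (Heps := cond_pos eps).
    set (N := 1 + 2 * M / eps).
    assert (0 <= 2 * M / eps) by (apply Rdiv_le_0_compat; lra).
    assert (HN1 : 1 <= N) by (unfold N; lra).
    assert (HMN : M / N < eps / 2).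
    { apply Rmult_lt_reg_r with N; [lra |].
      replace (M / N * N) with M by (field; lra).
      replace (eps / 2 * N) with (eps / 2 + M) by (unfold N; field; lra). lra. }
    exists (fun ab => fst ab < - N /\ N < snd ab). split.
    + exists (fun a => a < - N) (fun b => N < b); [exists (- N) | exists N | ]; auto.
    + intros [a b] [a' b'] [Ha Hb] [Ha' Hb']. simpl in *.
      apply (norm_compat1 (V := CV)). rewrite <- Cmod_norm.
      change (minus ?x ?y) with (Cminus x y). rewrite RInt_sub_tails by assumption.
      eapply Rle_lt_trans; [apply Cmod_triangle |].
      assert (Cmod (RInt (V := CV) f a' a) <= M / N) by (apply (Cmod_RInt_tail f); auto; lra).
      assert (Cmod (RInt (V := CV) f b b') <= M / N) by (apply (Cmod_RInt_tail f); auto; lra).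
      lra.
  - exists l. intros P HP. generalize (Hl P HP). unfold filtermapi, filtermap. apply filter_imp.
    intros [a b] HPab. exists (RInt (V := CV) f a b).
    split; [apply RInt_correct, ex_RInt_Ccontinuous, Hf | exact HPab].
Qed.

Lemma int_R_correct (f : R -> C) :
  sq_decay f -> is_RInt_gen (V := CV) f (Rbar_locally m_infty) (Rbar_locally p_infty) (int_R f).
Proof. intros Hf. unfold int_R. apply RInt_gen_correct, ex_RInt_gen_sq_decay, Hf. Qed.

Lemma int_R_approx (f : R -> C) eps : sq_decay f -> 0 < eps ->
  exists N, forall a b, a < - N -> N < b -> Cmod (RInt (V := CV) f a b - int_R f)%C < eps.
Proof.
  intros Hf Heps. assert (Hnf := norm_factor_gt_0 (K := R_AbsRing) (V := CV)).
  assert (Hp : 0 < eps / norm_factor (V := CV)) by (apply Rdiv_lt_0_compat; assumption).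
  destruct (int_R_correct f Hf (ball (int_R f) (mkposreal _ Hp)) (locally_ball _ _))
    as [Q R0 [M1 HM1] [M2 HM2] HQR].
  exists (Rmax (Rabs M1) (Rabs M2)). intros a b Ha Hb.
  destruct (HQR a b) as [v [Hv Hball]].
  - apply HM1. generalize (Rmax_l (Rabs M1) (Rabs M2)) (RRle_abs (- M1)).
    rewrite Rabs_Ropp. lra.
  - apply HM2. generalize (Rmax_r (Rabs M1) (Rabs M2)) (RRle_abs M2). lra.
  - simpl in Hv. rewrite (is_RInt_unique _ _ _ _ Hv). apply (norm_compat2 (V := CV)) in Hball.
    simpl in Hball. rewrite Cmod_norm.
    replace eps with (norm_factor (V := CV) * (eps / norm_factor (V := CV))) by (field; lra).
    exact Hball.
Qed.

Lemma int_R_unique (f : R -> C) L : Ccontinuous f ->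
  (forall eps, 0 < eps -> exists N, forall a b, a < - N -> N < b ->
     Cmod (RInt (V := CV) f a b - L)%C < eps) -> int_R f = L.
Proof.
  intros Hf HL. unfold int_R. apply (is_RInt_gen_unique (V := CV)). intros P [eps HP].
  destruct (HL eps (cond_pos eps)) as [N HN].
  exists (fun a => a < - N) (fun b => N < b); [exists (- N); auto | exists N; auto |].
  intros a b Ha Hb. exists (RInt (V := CV) f a b).
  split; [apply RInt_correct, ex_RInt_Ccontinuous, Hf |].
  apply HP, norm_compat1. rewrite <- Cmod_norm.
  apply HN; assumption.
Qed.

Lemma int_R_ext (f g : R -> C) : (forall s, f s = g s) -> int_R f = int_R g.
Proof. intros H. f_equal. apply functional_extensionality, H. Qed.

Lemma int_R_minus (f g : R -> C) :
  sq_decay f -> sq_decay g -> int_R (fun s => f s - g s)%C = (int_R f - int_R g)%C.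
Proof.
  intros Hf Hg. unfold int_R at 1. apply (is_RInt_gen_unique (V := CV)).
  apply (is_RInt_gen_minus (V := CV)); apply int_R_correct; assumption.
Qed.

Lemma sq_decay_plus (f g : R -> C) : sq_decay f -> sq_decay g -> sq_decay (fun s => f s + g s)%C.
Proof.
  intros [Hf [M1 H1]] [Hg [M2 H2]]. split; [apply Ccontinuous_plus; assumption |].
  exists (M1 + M2). intros s.
  generalize (H1 s) (H2 s) (Cmod_triangle (f s) (g s)) (pow2_ge_0 s). nra.
Qed.

Lemma sq_decay_Cmult (c : C) (f : R -> C) : sq_decay f -> sq_decay (fun s => c * f s)%C.
Proof.
  intros [Hf [M H]]. split; [apply Ccontinuous_mult; [apply Ccontinuous_const | assumption] |].
  exists (Cmod c * M). intros s. rewrite Cmod_mult, Rmult_assoc.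
  apply Rmult_le_compat_l; [apply Cmod_ge_0 | apply H].
Qed.

Lemma sq_decay_minus (f g : R -> C) : sq_decay f -> sq_decay g -> sq_decay (fun s => f s - g s)%C.
Proof.
  intros Hf Hg. apply (sq_decay_plus f (fun s => -1 * g s)%C) in Hf; [| apply sq_decay_Cmult, Hg].
  replace (fun s => f s - g s)%C with (fun s => f s + -1 * g s)%C; [assumption |].
  apply functional_extensionality. intros s. ring.
Qed.

Lemma sq_decay_ext (f g : R -> C) : (forall s, f s = g s) -> sq_decay f -> sq_decay g.
Proof. intros H. replace g with f; [trivial | apply functional_extensionality, H]. Qed.

Lemma sq_decay_mult_bounded (f u : R -> C) B :
  sq_decay f -> Ccontinuous u -> (forall s, Cmod (u s) <= B) -> sq_decay (fun s => f s * u s)%C.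
Proof.
  intros [Hf [M H]] Hu HB. split; [apply Ccontinuous_mult; assumption |].
  exists (M * B). intros s. rewrite Cmod_mult.
  replace (Cmod (f s) * Cmod (u s) * (1 + s ^ 2)) with (Cmod (f s) * (1 + s ^ 2) * Cmod (u s))
    by ring.
  apply Rle_trans with (M * Cmod (u s)).
  - apply Rmult_le_compat_r; [apply Cmod_ge_0 | apply H].
  - apply Rmult_le_compat_l; [apply (sq_bounded_ge0 f), H | apply HB].
Qed.

Lemma is_RInt_Cmult (f : R -> C) a b (l c : C) :
  is_RInt (V := CV) f a b l -> is_RInt (V := CV) (fun s => c * f s)%C a b (c * l)%C.
Proof.
  intros H. destruct c as [c1 c2].
  assert (H1 := is_RInt_fct_extend_fst (U := R_NormedModule) (V := R_NormedModule) f a b l H).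
  assert (H2 := is_RInt_fct_extend_snd (U := R_NormedModule) (V := R_NormedModule) f a b l H).
  apply (is_RInt_fct_extend_pair (U := R_NormedModule) (V := R_NormedModule)); simpl.
  - apply (is_RInt_minus (V := R_NormedModule));
      apply (is_RInt_scal (V := R_NormedModule)); assumption.
  - apply (is_RInt_plus (V := R_NormedModule));
      apply (is_RInt_scal (V := R_NormedModule)); assumption.
Qed.

Lemma int_R_Cmult (c : C) (f : R -> C) : sq_decay f -> int_R (fun s => c * f s)%C = (c * int_R f)%C.
Proof.
  intros Hf. apply int_R_unique; [apply Ccontinuous_mult; [apply Ccontinuous_const | apply Hf] |].
  intros eps Heps. assert (Hc := Cmod_ge_0 c).
  destruct (int_R_approx f (eps / (Cmod c + 1)) Hf) as [N HN]; [apply Rdiv_lt_0_compat; lra |].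
  exists N. intros a b Ha Hb.
  rewrite (is_RInt_unique _ _ _ _
            (is_RInt_Cmult f a b _ c (RInt_correct _ _ _ (ex_RInt_Ccontinuous f a b (proj1 Hf))))).
  replace (c * RInt (V := CV) f a b - c * int_R f)%C with (c * (RInt (V := CV) f a b - int_R f))%C
    by ring.
  rewrite Cmod_mult. specialize (HN a b Ha Hb).
  apply Rle_lt_trans with (Cmod c * (eps / (Cmod c + 1))); [apply Rmult_le_compat_l; lra |].
  apply Rmult_lt_reg_r with (Cmod c + 1); [lra |]. field_simplify; lra.
Qed.

Lemma Cmod_int_R_le (f : R -> C) B : sq_decay f ->
  (forall a b, a <= b -> Cmod (RInt (V := CV) f a b) <= B) -> Cmod (int_R f) <= B.
Proof.
  intros Hf HB. apply Rle_plus_epsilon. intros eps Heps.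
  destruct (int_R_approx f eps Hf Heps) as [N HN].
  set (I := RInt (V := CV) f (- Rabs N - 1) (Rabs N + 1)).
  assert (HI : Cmod I <= B) by (apply HB; generalize (Rabs_pos N); lra).
  assert (HIf : Cmod (I - int_R f)%C < eps).
  { apply HN; generalize (RRle_abs N) (RRle_abs (- N)); rewrite Rabs_Ropp; lra. }
  assert (Htri := Cmod_triangle I (- (I - int_R f))). rewrite Cmod_opp in Htri.
  replace (I + - (I - int_R f))%C with (int_R f) in Htri by ring. lra.
Qed.

Lemma Cmod_int_R_sq_bounded (f : R -> C) M :
  Ccontinuous f -> sq_bounded f M -> Cmod (int_R f) <= PI * M.
Proof.
  intros Hf HM. apply Cmod_int_R_le; [split; [| exists M] |]; try assumption.
  intros a b Hab. apply Cmod_RInt_sq_bounded; assumption.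
Qed.

Lemma Cmod_int_R_taylor (f0 f1 f2 : R -> C) (h K : R) :
  sq_decay f0 -> sq_decay f1 -> sq_decay f2 ->
  sq_bounded (fun s => f1 s - f0 s - h * f2 s)%C K ->
  Cmod (int_R f1 - int_R f0 - h * int_R f2)%C <= PI * K.
Proof.
  intros H0 H1 H2 HK.
  assert (H10 := sq_decay_minus f1 f0 H1 H0). assert (H2h := sq_decay_Cmult h f2 H2).
  rewrite <- (int_R_Cmult h f2 H2), <- (int_R_minus f1 f0 H1 H0),
          <- (int_R_minus _ _ H10 H2h).
  apply Cmod_int_R_sq_bounded; [apply (sq_decay_minus _ _ H10 H2h) | exact HK].
Qed.

Lemma RInt_reflect (g : R -> C) x a b : Ccontinuous g ->
  RInt (V := CV) (fun t => g (x - t)) a b = RInt (V := CV) g (x - b) (x - a).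
Proof.
  intros Hg. apply is_RInt_unique.
  rewrite <- (opp_RInt_swap (V := CV)) by apply ex_RInt_Ccontinuous, Hg.
  assert (H := is_RInt_opp (V := CV) g (x - a) (x - b) _
                 (RInt_correct (V := CV) g _ _ (ex_RInt_Ccontinuous g _ _ Hg))).
  replace (x - a) with (-1 * a + x) in H by ring. replace (x - b) with (-1 * b + x) in H by ring.
  apply (is_RInt_comp_lin (V := CV) (fun s => opp (g s))) in H.
  replace (-1 * a + x) with (x - a) in H by ring. replace (-1 * b + x) with (x - b) in H by ring.
  eapply (is_RInt_ext (V := CV)); [| exact H].
  intros t _. cbv beta. replace (-1 * t + x) with (x - t) by ring.
  change (-1) with (opp (one (K := R_Ring))).
  rewrite (scal_opp_one (K := R_Ring) (V := CV)). apply (opp_opp (G := CV)).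
Qed.

Lemma int_R_reflect (g : R -> C) x : sq_decay g -> int_R (fun t => g (x - t)) = int_R g.
Proof.
  intros Hg. apply int_R_unique.
  - apply Ccontinuous_comp; [apply Hg |]. intros s.
    apply (ex_derive_continuous (K := R_AbsRing) (V := R_NormedModule)). auto_derive. trivial.
  - intros eps Heps. destruct (int_R_approx g eps Hg Heps) as [N HN].
    exists (Rabs N + Rabs x). intros a b Ha Hb. rewrite RInt_reflect by apply Hg.
    generalize (RRle_abs x) (RRle_abs (- x)) (RRle_abs N) (RRle_abs (- N)). rewrite !Rabs_Ropp.
    intros. apply HN; lra.
Qed.

(** * The complex exponential *)

Lemma exp_le_compat x y : x <= y -> exp x <= exp y.
Proof. intros [H | ->]; [apply Rlt_le, exp_increasing, H | apply Rle_refl]. Qed.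

Lemma Cmod_le_Re_Im (z : C) : Cmod z <= Rabs (Re z) + Rabs (Im z).
Proof.
  destruct z as [p q]. unfold Cmod. simpl.
  rewrite <- (sqrt_pow2 (Rabs p + Rabs q)) by (generalize (Rabs_pos p) (Rabs_pos q); lra).
  apply sqrt_le_1_alt.
  rewrite <- (Rabs_pos_eq (p * (p * 1))), <- (Rabs_pos_eq (q * (q * 1))) by nra.
  rewrite !Rabs_mult, Rabs_R1. generalize (Rabs_pos p) (Rabs_pos q). nra.
Qed.

Lemma taylor2_real (g g1 g2 : R -> R) u h B :
  (forall t, is_derive g t (g1 t)) -> (forall t, is_derive g1 t (g2 t)) ->
  (forall t, Rabs (t - u) <= Rabs h -> Rabs (g2 t) <= B) ->
  Rabs (g (u + h) - g u - h * g1 u) <= B * h ^ 2.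
Proof.
  intros Hg Hg1 HB.
  destruct (MVT_cor4 g g1 u (Rabs h) (fun c _ => Hg c) (u + h)) as [c [Hc1 Hc2]];
    [replace (u + h - u) with h by ring; lra |].
  destruct (MVT_cor4 g1 g2 u (Rabs h) (fun c _ => Hg1 c) c) as [c' [Hc1' Hc2']];
    [replace (u + h - u) with h in Hc2 by ring; lra |].
  replace (u + h - u) with h in Hc1, Hc2 by ring.
  rewrite Hc1. replace (g1 c * h - h * g1 u) with (h * (g1 c - g1 u)) by ring.
  rewrite Hc1', !Rabs_mult.
  assert (Rabs (g2 c') <= B) by (apply HB; lra).
  assert (Rabs (g2 c') * Rabs (c - u) <= B * Rabs h)
    by (apply Rmult_le_compat; try apply Rabs_pos; lra).
  replace (h ^ 2) with (Rabs h * Rabs h) by (rewrite <- Rabs_mult, Rabs_pos_eq; [ring | nra]).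
  apply Rle_trans with (Rabs h * (B * Rabs h));
    [apply Rmult_le_compat_l; [apply Rabs_pos | lra] | right; ring].
Qed.

Lemma Rabs_cos_sin_comb p q r t :
  0 <= r -> p ^ 2 + q ^ 2 <= r ^ 2 -> Rabs (p * cos t + q * sin t) <= r.
Proof.
  intros Hr Hpq. rewrite <- (Rabs_pos_eq r Hr). apply Rsqr_le_abs_0. unfold Rsqr.
  assert (Hcs := sin2_cos2 t). unfold Rsqr in Hcs.
  assert (Hid : (p * cos t + q * sin t) ^ 2 + (p * sin t - q * cos t) ^ 2
                = (p ^ 2 + q ^ 2) * (sin t * sin t + cos t * cos t)) by ring.
  rewrite Hcs in Hid. generalize (pow2_ge_0 (p * sin t - q * cos t)). nra.
Qed.

Definition cexp (z : C) : C := (exp (Re z) * cos (Im z), exp (Re z) * sin (Im z)).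

Lemma cexp_plus (z1 z2 : C) : cexp (z1 + z2)%C = (cexp z1 * cexp z2)%C.
Proof.
  destruct z1 as [a b], z2 as [c d]. unfold cexp. simpl.
  rewrite exp_plus, cos_plus, sin_plus. apply injective_projections; simpl; ring.
Qed.

Lemma Cmod_cexp (z : C) : Cmod (cexp z) = exp (Re z).
Proof.
  unfold cexp, Cmod. simpl. assert (H := sin2_cos2 (Im z)). unfold Rsqr in H.
  replace (_ + _) with (exp (Re z) ^ 2)
    by (transitivity (exp (Re z) ^ 2 * (sin (Im z) * sin (Im z) + cos (Im z) * cos (Im z)));
        [rewrite H; ring | ring]).
  apply sqrt_pow2, Rlt_le, exp_pos.
Qed.

Lemma cexpi_cexp (t : R) : cexpi t = cexp (0, t).
Proof. unfold cexpi, cexp. simpl. rewrite exp_0. apply injective_projections; simpl; ring. Qed.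

Lemma cexp_scal (z : C) (t : R) :
  cexp (z * RtoC t) = (exp (Re z * t) * cos (Im z * t), exp (Re z * t) * sin (Im z * t)).
Proof.
  destruct z as [a b]. unfold cexp. simpl.
  replace (a * t - b * 0) with (a * t) by ring. replace (a * 0 + b * t) with (b * t) by ring.
  reflexivity.
Qed.

Lemma Cmod_cexp_scal (z : C) (t : R) : Cmod (cexp (z * RtoC t)) = exp (Re z * t).
Proof. rewrite Cmod_cexp. f_equal. destruct z as [a b]. simpl. ring. Qed.

Lemma Ccontinuous_cexp (g : R -> C) : Ccontinuous g -> Ccontinuous (fun s => cexp (g s)).
Proof.
  intros Hg.
  assert (Hr := fun s => Ccontinuous_Re g s Hg). assert (Hi := fun s => Ccontinuous_Im g s Hg).
  unfold cexp. apply Ccontinuous_pair; intros s.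
  - apply (continuous_mult (K := R_AbsRing) (fun t => exp (Re (g t))) (fun t => cos (Im (g t))));
      [apply continuous_exp_comp | apply continuous_cos_comp]; auto.
  - apply (continuous_mult (K := R_AbsRing) (fun t => exp (Re (g t))) (fun t => sin (Im (g t))));
      [apply continuous_exp_comp | apply continuous_sin_comp]; auto.
Qed.

(* Each component of [t |-> cexp (z t)] has second derivative of size at most
   [|z|^2 exp (Re z t)]. *)
Lemma cexp_taylor2 (z : C) u h : Rabs h <= 1 ->
  Cmod (cexp (z * RtoC (u + h)) - cexp (z * RtoC u) - RtoC h * (z * cexp (z * RtoC u)))%C
  <= 2 * Cmod z ^ 2 * exp (Re z * u + Rabs (Re z)) * h ^ 2.
Proof.
  intros Hh. destruct z as [a th]. simpl Re.
  assert (Hz : Cmod (a, th) ^ 2 = a ^ 2 + th ^ 2).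
  { unfold Cmod. rewrite pow2_sqrt by (simpl; nra). reflexivity. }
  rewrite Hz. set (B := (a ^ 2 + th ^ 2) * exp (a * u + Rabs a)).
  assert (HB : forall t p q, Rabs (t - u) <= Rabs h -> p ^ 2 + q ^ 2 = (a ^ 2 + th ^ 2) ^ 2 ->
                 Rabs (exp (a * t) * (p * cos (th * t) + q * sin (th * t))) <= B).
  { intros t p q Ht Hpq. unfold B. rewrite Rabs_mult, (Rabs_pos_eq (exp _)), Rmult_comm
      by apply Rlt_le, exp_pos.
    apply Rmult_le_compat; [apply Rabs_pos | apply Rlt_le, exp_pos | |].
    - apply Rabs_cos_sin_comb; nra.
    - apply exp_le_compat.
      assert (Rabs (a * (t - u)) <= Rabs a) by (rewrite Rabs_mult; generalize (Rabs_pos a); nra).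
      generalize (RRle_abs (a * (t - u))). lra. }
  assert (HRe : Rabs (exp (a * (u + h)) * cos (th * (u + h)) - exp (a * u) * cos (th * u)
                      - h * (exp (a * u) * (a * cos (th * u) + - th * sin (th * u)))) <= B * h ^ 2).
  { apply (taylor2_real (fun t => exp (a * t) * cos (th * t))
      (fun t => exp (a * t) * (a * cos (th * t) + - th * sin (th * t)))
      (fun t => exp (a * t) * ((a ^ 2 - th ^ 2) * cos (th * t) + (-2 * a * th) * sin (th * t))));
      [intros t; auto_derive; auto; ring .. | intros t Ht; apply HB; [exact Ht | ring]]. }
  assert (HIm : Rabs (exp (a * (u + h)) * sin (th * (u + h)) - exp (a * u) * sin (th * u)
                      - h * (exp (a * u) * (th * cos (th * u) + a * sin (th * u)))) <= B * h ^ 2).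
  { apply (taylor2_real (fun t => exp (a * t) * sin (th * t))
      (fun t => exp (a * t) * (th * cos (th * t) + a * sin (th * t)))
      (fun t => exp (a * t) * ((2 * a * th) * cos (th * t) + (a ^ 2 - th ^ 2) * sin (th * t))));
      [intros t; auto_derive; auto; ring .. | intros t Ht; apply HB; [exact Ht | ring]]. }
  eapply Rle_trans; [apply Cmod_le_Re_Im |].
  rewrite !cexp_scal. simpl Re; simpl Im.
  match goal with |- Rabs ?x + Rabs ?y <= _ =>
    replace x with (exp (a * (u + h)) * cos (th * (u + h)) - exp (a * u) * cos (th * u)
                    - h * (exp (a * u) * (a * cos (th * u) + - th * sin (th * u)))) by ring;
    replace y with (exp (a * (u + h)) * sin (th * (u + h)) - exp (a * u) * sin (th * u)
                    - h * (exp (a * u) * (th * cos (th * u) + a * sin (th * u)))) by ring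
  end.
  unfold B in HRe, HIm. lra.
Qed.

(** * Functions with quadratically small increments *)

Lemma Cmod_telescope (F : R -> C) (K delta : R) (N : nat) :
  (forall k : nat, (k < N)%nat ->
     Cmod (F (INR k * delta + delta)%R - F (INR k * delta)%R)%C <= K) ->
  Cmod (F (INR N * delta)%R - F 0)%C <= INR N * K.
Proof.
  induction N as [| N IH]; intros H.
  - simpl. rewrite Rmult_0_l. replace (F 0 - F 0)%C with (RtoC 0) by ring. rewrite Cmod_0. lra.
  - rewrite S_INR. replace ((INR N + 1) * delta) with (INR N * delta + delta) by ring.
    replace (F (INR N * delta + delta)%R - F 0)%C
      with ((F (INR N * delta + delta)%R - F (INR N * delta)%R) + (F (INR N * delta)%R - F 0))%C
      by ring.
    eapply Rle_trans; [apply Cmod_triangle |].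
    generalize (H N (Nat.lt_succ_diag_r N)) (IH (fun k Hk => H k (Nat.lt_lt_succ_r _ _ Hk))). lra.
Qed.

(* Splitting [0, d] into [N] steps of length [d / N] bounds [|F d - F 0|] by [K d^2 / N]. *)
Lemma eq_of_sq_increments (F : R -> C) (K d : R) : 0 < d ->
  (forall u h, 0 <= u < d -> 0 <= h <= 1 -> Cmod (F (u + h)%R - F u)%C <= K * h ^ 2) -> F d = F 0.
Proof.
  intros Hd H.
  assert (Hle : forall N : nat, d <= INR N -> Cmod (F d - F 0)%C <= K * d ^ 2 / INR N).
  { intros N HN. set (delta := d / INR N). assert (Hdelta : 0 < delta <= 1).
    { unfold delta. split; [apply Rdiv_lt_0_compat; lra |].
      apply Rmult_le_reg_r with (INR N); [lra |]. field_simplify; lra. }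
    replace d with (INR N * delta) at 1 by (unfold delta; field; lra).
    eapply Rle_trans; [apply (Cmod_telescope F (K * delta ^ 2)) |].
    - intros k Hk. assert (INR k + 1 <= INR N) by (rewrite <- S_INR; apply le_INR; lia).
      assert (0 <= INR k) by apply pos_INR.
      apply H; [split; [nra |] | lra].
      apply Rlt_le_trans with (INR N * delta); [nra | right; unfold delta; field; lra].
    - right. unfold delta. field. lra. }
  assert (H0 : Cmod (F d - F 0)%C <= 0).
  { apply Rle_plus_epsilon. intros eps Heps.
    destruct (INR_unbounded (Rmax d (Rabs K * d ^ 2 / eps))) as [N HN].
    generalize (Rmax_l d (Rabs K * d ^ 2 / eps)) (Rmax_r d (Rabs K * d ^ 2 / eps)). intros H1 H2.
    eapply Rle_trans; [apply (Hle N); lra |].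
    assert (K * d ^ 2 <= Rabs K * d ^ 2) by (apply Rmult_le_compat_r; [nra | apply RRle_abs]).
    assert (Rabs K * d ^ 2 < eps * INR N).
    { apply Rmult_lt_reg_r with (/ eps); [apply Rinv_0_lt_compat; lra |].
      replace (eps * INR N * / eps) with (INR N) by (field; lra). unfold Rdiv in H2. lra. }
    apply Rmult_le_reg_r with (INR N); [lra |].
    unfold Rdiv. rewrite Rmult_assoc, Rinv_l by lra. nra. }
  apply Ceq_minus, Cmod_eq_0, Rle_antisym; [exact H0 | apply Cmod_ge_0].
Qed.

Lemma taylor2_deriv_eq0 (F : R -> C) (L : C) (K xi r : R) : 0 < r ->
  (forall h, Rabs h <= 1 -> Cmod (F (xi + h)%R - F xi - RtoC h * L)%C <= K * h ^ 2) ->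
  (forall h, Rabs h < r -> F (xi + h) = 0%C) -> L = 0%C.
Proof.
  intros Hr HT HZ.
  assert (H0 : F xi = 0%C) by (rewrite <- (Rplus_0_r xi); apply HZ; rewrite Rabs_R0; lra).
  assert (Hsmall : forall h, 0 < h < Rmin r 1 -> Cmod L <= K * h).
  { intros h [Hh0 Hh]. generalize (Rmin_l r 1) (Rmin_r r 1). intros H1 H2.
    specialize (HT h ltac:(rewrite Rabs_pos_eq; lra)).
    rewrite H0, HZ in HT by (rewrite Rabs_pos_eq; lra).
    replace (0 - 0 - RtoC h * L)%C with (- (RtoC h * L))%C in HT by ring.
    rewrite Cmod_opp, Cmod_mult, Cmod_R, Rabs_pos_eq in HT by lra.
    apply Rmult_le_reg_l with h; [lra | nra]. }
  apply Cmod_eq_0, Rle_antisym; [| apply Cmod_ge_0].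
  apply Rle_plus_epsilon. intros eps Heps.
  set (h := Rmin (Rmin r 1 / 2) (eps / (Rabs K + 1))).
  assert (HK := Rabs_pos K). assert (Hm : 0 < Rmin r 1) by (apply Rmin_pos; lra).
  assert (Hh : 0 < h) by (apply Rmin_pos; [lra | apply Rdiv_lt_0_compat; lra]).
  assert (Hh1 : h < Rmin r 1)
    by (generalize (Rmin_l (Rmin r 1 / 2) (eps / (Rabs K + 1))); fold h; lra).
  assert (Hh2 : h * (Rabs K + 1) <= eps).
  { apply Rle_trans with (eps / (Rabs K + 1) * (Rabs K + 1));
      [apply Rmult_le_compat_r; [lra | apply Rmin_r] |].
    right. field. lra. }
  apply Rle_trans with (K * h); [apply Hsmall; lra |].
  generalize (RRle_abs K). nra.
Qed.

(** * Fourier transforms of rapidly decreasing functions *)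

Definition rapid_decay (psi : R -> C) : Prop :=
  Ccontinuous psi /\ forall m : nat, exists M, forall s, Cmod (psi s) * Rabs s ^ m <= M.

Definition xpow_mul (j : nat) (psi : R -> C) (s : R) : C := (RtoC (s ^ j) * psi s)%C.

Lemma xpow_mul_succ (j : nat) (psi : R -> C) : xpow_mul 1 (xpow_mul j psi) = xpow_mul (S j) psi.
Proof.
  apply functional_extensionality. intros s. unfold xpow_mul.
  replace (s ^ S j) with (s ^ 1 * s ^ j) by (simpl; ring). rewrite RtoC_mult. ring.
Qed.

Lemma continuous_pow (j : nat) s : continuous (fun t => t ^ j) s.
Proof.
  apply (ex_derive_continuous (K := R_AbsRing) (V := R_NormedModule)). auto_derive. trivial.
Qed.

Lemma schwartz_rapid_decay (phi : R -> C) : is_schwartz phi -> rapid_decay phi.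
Proof.
  intros [D [HD0 [HD1 HD2]]]. split.
  - intros s. rewrite <- HD0.
    apply (ex_derive_continuous (K := R_AbsRing) (V := C_R_NormedModule)).
    exists (D 1%nat s). apply HD1.
  - intros m. destruct (HD2 0%nat m) as [M HM]. exists M. intros s.
    rewrite <- HD0, RPow_abs, Rmult_comm. apply HM.
Qed.

Lemma rapid_decay_xpow_mul (j : nat) (psi : R -> C) :
  rapid_decay psi -> rapid_decay (xpow_mul j psi).
Proof.
  intros [Hc H]. split.
  - apply Ccontinuous_mult; [apply Ccontinuous_RtoC, continuous_pow | exact Hc].
  - intros m. destruct (H (j + m)%nat) as [M HM]. exists M. intros s.
    unfold xpow_mul. rewrite Cmod_mult, Cmod_R, <- RPow_abs.
    specialize (HM s). rewrite pow_add in HM. lra.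
Qed.

Lemma rapid_decay_sq_decay (psi : R -> C) : rapid_decay psi -> sq_decay psi.
Proof.
  intros [Hc H]. split; [exact Hc |].
  destruct (H 0%nat) as [M0 H0]. destruct (H 2%nat) as [M2 H2].
  exists (M0 + M2). intros s. specialize (H0 s). specialize (H2 s).
  rewrite pow2_abs in H2. simpl in H0. lra.
Qed.

Lemma sq_decay_xpow_mul (j : nat) (psi : R -> C) : rapid_decay psi -> sq_decay (xpow_mul j psi).
Proof. intros H. apply rapid_decay_sq_decay, rapid_decay_xpow_mul, H. Qed.

Lemma Cmod_cexpi (t : R) : Cmod (cexpi t) = 1.
Proof. rewrite cexpi_cexp, Cmod_cexp. apply exp_0. Qed.

Lemma Ccontinuous_cexpi (u : R -> R) :
  (forall s, continuous u s) -> Ccontinuous (fun s => cexpi (u s)).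
Proof.
  intros Hu. apply Ccontinuous_pair; intros s;
    [apply continuous_cos_comp | apply continuous_sin_comp]; apply Hu.
Qed.

Lemma sq_decay_fourier_integrand (psi : R -> C) xi :
  sq_decay psi -> sq_decay (fun s => psi s * cexpi (- (2 * PI * s * xi)))%C.
Proof.
  intros Hpsi. apply (sq_decay_mult_bounded _ _ 1 Hpsi).
  - apply Ccontinuous_cexpi. intros s.
    apply (ex_derive_continuous (K := R_AbsRing) (V := R_NormedModule)). auto_derive. trivial.
  - intros s. rewrite Cmod_cexpi. lra.
Qed.

Lemma cexpi_fourier_kernel s xi :
  cexpi (- (2 * PI * s * xi)) = cexp ((0, - (2 * PI * s))%R * RtoC xi)%C.
Proof. rewrite cexpi_cexp. f_equal. apply injective_projections; simpl; ring. Qed.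

Lemma fourier_kernel_taylor2 s xi h : Rabs h <= 1 ->
  Cmod (cexpi (- (2 * PI * s * (xi + h))) - cexpi (- (2 * PI * s * xi))
        - RtoC h * ((0, - (2 * PI))%R * RtoC s * cexpi (- (2 * PI * s * xi))))%C
  <= 8 * PI ^ 2 * s ^ 2 * h ^ 2.
Proof.
  intros Hh. rewrite !cexpi_fourier_kernel. set (z := (0, - (2 * PI * s))%R : C).
  replace ((0, - (2 * PI))%R * RtoC s)%C with z
    by (unfold z; apply injective_projections; simpl; ring).
  assert (Hz2 : Cmod z ^ 2 = 4 * PI ^ 2 * s ^ 2)
    by (unfold z, Cmod; rewrite pow2_sqrt by (simpl; nra); simpl; ring).
  eapply Rle_trans; [apply cexp_taylor2, Hh |]. simpl Re.
  rewrite Rmult_0_l, Rabs_R0, Rplus_0_r, exp_0, Hz2. right. ring.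
Qed.

Lemma fourier_taylor2 (psi : R -> C) : rapid_decay psi ->
  exists K, forall xi h, Rabs h <= 1 ->
    Cmod (fourier psi (xi + h) - fourier psi xi
          - RtoC h * ((0, - (2 * PI))%R * fourier (xpow_mul 1 psi) xi))%C <= K * h ^ 2.
Proof.
  intros Hpsi. destruct (sq_decay_xpow_mul 2 psi Hpsi) as [_ [M2 HM2]].
  exists (PI * (8 * PI ^ 2 * M2)). intros xi h Hh.
  assert (Hd := fun xi => sq_decay_fourier_integrand psi xi (rapid_decay_sq_decay psi Hpsi)).
  assert (Hd1 := sq_decay_fourier_integrand _ xi (sq_decay_xpow_mul 1 psi Hpsi)).
  unfold fourier. rewrite <- (int_R_Cmult _ _ Hd1).
  replace (PI * (8 * PI ^ 2 * M2) * h ^ 2) with (PI * (8 * PI ^ 2 * h ^ 2 * M2)) by ring.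
  apply Cmod_int_R_taylor; [apply Hd | apply Hd | apply sq_decay_Cmult, Hd1 |].
  intros s. cbv beta. unfold xpow_mul. rewrite pow_1.
  match goal with |- Cmod ?e * _ <= _ =>
    replace e with (psi s * (cexpi (- (2 * PI * s * (xi + h))) - cexpi (- (2 * PI * s * xi))
                    - RtoC h * ((0, - (2 * PI))%R * RtoC s * cexpi (- (2 * PI * s * xi)))))%C
      by ring
  end.
  specialize (HM2 s). unfold xpow_mul in HM2. rewrite Cmod_mult, Cmod_R, Rabs_pos_eq in HM2 by nra.
  rewrite Cmod_mult. assert (H0 := Cmod_ge_0 (psi s)).
  apply Rle_trans with (Cmod (psi s) * (8 * PI ^ 2 * s ^ 2 * h ^ 2) * (1 + s ^ 2)).
  - apply Rmult_le_compat_r; [nra |]. apply Rmult_le_compat_l, fourier_kernel_taylor2, Hh. exact H0.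
  - replace (Cmod (psi s) * (8 * PI ^ 2 * s ^ 2 * h ^ 2) * (1 + s ^ 2))
      with (8 * PI ^ 2 * h ^ 2 * (s ^ 2 * Cmod (psi s) * (1 + s ^ 2))) by ring.
    apply Rmult_le_compat_l; [nra | exact HM2].
Qed.

Lemma fourier_xpow_mul_eq0 (psi : R -> C) d : rapid_decay psi ->
  (forall xi, Rabs xi < d -> fourier psi xi = 0%C) ->
  forall j xi, Rabs xi < d -> fourier (xpow_mul j psi) xi = 0%C.
Proof.
  intros Hpsi H0 j. induction j as [| j IH]; intros xi Hxi.
  - rewrite <- (H0 xi Hxi). unfold fourier. apply int_R_ext. intros s. unfold xpow_mul. simpl. ring.
  - destruct (fourier_taylor2 _ (rapid_decay_xpow_mul j psi Hpsi)) as [K HK].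
    assert (HL : ((0, - (2 * PI))%R * fourier (xpow_mul 1 (xpow_mul j psi)) xi)%C = 0%C).
    { apply (taylor2_deriv_eq0 (fourier (xpow_mul j psi)) _ K xi (d - Rabs xi)); [lra | apply HK |].
      intros h Hh. apply IH. generalize (Rabs_triang xi h). lra. }
    assert (Hc : ((0, - (2 * PI))%R : C) <> 0%C).
    { intros Hc. apply (f_equal Im) in Hc. simpl in Hc. generalize PI_RGT_0. lra. }
    rewrite <- xpow_mul_succ, <- (Cmult_1_l (fourier _ xi)), <- (Cinv_l _ Hc), <- Cmult_assoc, HL.
    ring.
Qed.

Lemma fourier_eq0_of_dist_support (phi : R -> C) d :
  dist_to_0 (support (fourier phi)) d -> forall xi, Rabs xi < d -> fourier phi xi = 0%C.
Proof.
  intros [Hd _] xi Hxi. destruct (Ceq_dec (fourier phi xi) 0) as [E | E]; [exact E |].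
  exfalso. assert (Hs : support (fourier phi) xi).
  { intros e He. exists xi. rewrite Rminus_diag, Rabs_R0. auto. }
  specialize (Hd xi Hs). lra.
Qed.

(** * The Cauchy transform *)

Definition cauchy_transform (psi : R -> C) (w : C) : C :=
  int_R (fun s => psi s / (RtoC s - w))%C.

Lemma Cmod_sub_ge_Im (w : C) s : Rabs (Im w) <= Cmod (RtoC s - w)%C.
Proof.
  eapply Rle_trans; [| apply Rmax_Cmod]. eapply Rle_trans; [| apply Rmax_r].
  simpl. rewrite Rplus_0_l, Rabs_Ropp. apply Rle_refl.
Qed.

Lemma Cmod_sub_le (w : C) s : Cmod (RtoC s - w)%C <= Rabs s + Cmod w.
Proof.
  unfold Cminus. rewrite <- Cmod_R, <- (Cmod_opp w). apply Cmod_triangle.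
Qed.

Lemma sub_neq0 (w : C) s : Im w <> 0 -> (RtoC s - w)%C <> 0%C.
Proof.
  intros Hw Hs. apply Hw. apply (f_equal Im) in Hs. destruct w as [p q]. simpl in *. lra.
Qed.

Lemma sq_decay_div_sub (psi : R -> C) (w : C) :
  sq_decay psi -> Im w <> 0 -> sq_decay (fun s => psi s / (RtoC s - w))%C.
Proof.
  intros Hpsi Hw. apply (sq_decay_mult_bounded _ _ (/ Rabs (Im w)) Hpsi).
  - apply Ccontinuous_inv; [| intros s; apply sub_neq0, Hw].
    apply Ccontinuous_minus;
      [apply Ccontinuous_RtoC; intros s; apply continuous_id | apply Ccontinuous_const].
  - intros s. rewrite Cmod_inv by apply sub_neq0, Hw.
    apply Rinv_le_contravar; [apply Rabs_pos_lt, Hw | apply Cmod_sub_ge_Im].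
Qed.

Lemma poisson_partial_fractions x y s : 0 < y ->
  RtoC (poisson y (x - s)) =
  (/ (0, 2 * PI)%R * (/ (RtoC s - (x, y)%R) - / (RtoC s - (x, - y)%R)))%C.
Proof.
  intros Hy. assert (HPi := PI_RGT_0).
  assert (0 < (s - x) ^ 2 + y ^ 2) by (generalize (pow2_ge_0 (s - x)) (pow_lt y 2 Hy); lra).
  unfold poisson, RtoC, Cinv, Cmult, Cminus, Cplus, Copp. simpl.
  apply injective_projections; simpl; field; repeat split; nra.
Qed.

Lemma conv_poisson_cauchy (phi : R -> C) y x : sq_decay phi -> 0 < y ->
  conv_poisson phi y x =
  (/ (0, 2 * PI)%R * (cauchy_transform phi (x, y)%R - cauchy_transform phi (x, - y)%R))%C.
Proof.
  intros Hphi Hy. assert (HPi := PI_RGT_0).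
  assert (Hup : Im (x, y)%R <> 0) by (simpl; lra).
  assert (Hlow : Im (x, - y)%R <> 0) by (simpl; lra).
  set (g := fun s => (phi s * RtoC (poisson y (x - s)))%C).
  assert (Hg : sq_decay g).
  { apply (sq_decay_mult_bounded _ _ (/ (PI * y)) Hphi).
    - apply Ccontinuous_RtoC. intros s. unfold poisson.
      apply (ex_derive_continuous (K := R_AbsRing) (V := R_NormedModule)). auto_derive.
      generalize (pow2_ge_0 (x - s)). simpl. nra.
    - intros s. rewrite Cmod_R. unfold poisson. set (t := x - s).
      assert (0 < t ^ 2 + y ^ 2) by nra.
      rewrite Rabs_pos_eq by (apply Rmult_le_pos; [apply Rlt_le, Rinv_0_lt_compat; lra |
                                                   apply Rdiv_le_0_compat; lra]).
      rewrite Rinv_mult. apply Rmult_le_compat_l; [apply Rlt_le, Rinv_0_lt_compat; lra |].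
      apply Rmult_le_reg_r with (y * (t ^ 2 + y ^ 2)); [nra |].
      replace (y / (t ^ 2 + y ^ 2) * (y * (t ^ 2 + y ^ 2))) with (y * y) by (field; lra).
      replace (/ y * (y * (t ^ 2 + y ^ 2))) with (t ^ 2 + y ^ 2) by (field; lra). nra. }
  unfold conv_poisson. rewrite (int_R_ext _ (fun t => g (x - t)))
    by (intros t; unfold g; replace (x - (x - t)) with t by ring; reflexivity).
  rewrite (int_R_reflect g x Hg). unfold cauchy_transform.
  assert (H1 := sq_decay_div_sub phi _ Hphi Hup). assert (H2 := sq_decay_div_sub phi _ Hphi Hlow).
  rewrite <- (int_R_minus _ _ H1 H2), <- (int_R_Cmult _ _ (sq_decay_minus _ _ H1 H2)).
  apply int_R_ext. intros s. unfold g. rewrite poisson_partial_fractions by assumption.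
  unfold Cdiv. ring.
Qed.

Lemma int_R_eq_fourier0 (psi : R -> C) : int_R psi = fourier psi 0.
Proof.
  unfold fourier. apply int_R_ext. intros s.
  replace (- (2 * PI * s * 0)) with 0 by ring. unfold cexpi. rewrite cos_0, sin_0.
  apply injective_projections; simpl; ring.
Qed.

Lemma cauchy_transform_mul (psi : R -> C) (w : C) :
  sq_decay psi -> sq_decay (xpow_mul 1 psi) -> Im w <> 0 ->
  (w * cauchy_transform psi w)%C = (cauchy_transform (xpow_mul 1 psi) w - int_R psi)%C.
Proof.
  intros H0 H1 Hw. unfold cauchy_transform.
  rewrite <- (int_R_Cmult w _ (sq_decay_div_sub _ _ H0 Hw)),
          <- (int_R_minus _ _ (sq_decay_div_sub _ _ H1 Hw) H0).
  apply int_R_ext. intros s. unfold xpow_mul. rewrite pow_1.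
  field. apply sub_neq0, Hw.
Qed.

Lemma cauchy_transform_pow (psi : R -> C) (w : C) : rapid_decay psi -> Im w <> 0 ->
  (forall j, int_R (xpow_mul j psi) = 0%C) ->
  forall k, (w ^ k * cauchy_transform psi w)%C = cauchy_transform (xpow_mul k psi) w.
Proof.
  intros Hpsi Hw Hmom k. induction k as [| k IH].
  - unfold cauchy_transform, xpow_mul. simpl. rewrite Cmult_1_l.
    apply int_R_ext. intros s. unfold Cdiv. ring.
  - rewrite Cpow_S, <- Cmult_assoc, IH, cauchy_transform_mul, Hmom, xpow_mul_succ.
    + ring.
    + apply sq_decay_xpow_mul, Hpsi.
    + rewrite xpow_mul_succ. apply sq_decay_xpow_mul, Hpsi.
    + exact Hw.
Qed.

(** * Decay in the half-planes *)

Lemma Cmod_sub_sq (w : C) s : Cmod (RtoC s - w)%C ^ 2 = (s - Re w) ^ 2 + Im w ^ 2.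
Proof.
  unfold Cmod. rewrite pow2_sqrt by (apply Rplus_le_le_0_compat; apply pow2_ge_0).
  destruct w as [p q]. simpl. ring.
Qed.

Lemma amgm_div (p q t : R) : 0 <= p -> 0 < q -> 0 < t -> p / q <= (p ^ 2 / t + t / q ^ 2) / 2.
Proof.
  intros Hp Hq Ht. assert (0 <= (p * q - t) ^ 2) by apply pow2_ge_0.
  assert (0 < q ^ 2) by (apply pow_lt; lra).
  apply Rmult_le_reg_r with (2 * t * q ^ 2); [nra |].
  replace (p / q * (2 * t * q ^ 2)) with (2 * p * q * t) by (field; lra).
  replace ((p ^ 2 / t + t / q ^ 2) / 2 * (2 * t * q ^ 2)) with (p ^ 2 * q ^ 2 + t ^ 2)
    by (field; lra).
  nra.
Qed.

Section HalfPlane.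

Variables (psi : R -> C) (w : C) (sg y : R).
Hypotheses (Hpsi : rapid_decay psi) (Hsg : sg * sg = 1) (Hwy : sg * Im w = y) (Hy : 0 < y).

(* With sg the sign of Im w, [phase s = -2 pi i sg (s - w)] has real part [-2 pi y] and is
   affine in [s] with slope [-2 pi i sg], so the integrand of [damped_cauchy_deriv u] is a
   multiple of the Fourier integrand of [psi] at [sg u]. *)
Definition phase (s : R) : C := ((0, - (2 * PI * sg))%R * (RtoC s - w))%C.

Definition damped_cauchy (u : R) : C :=
  int_R (fun s => psi s / (RtoC s - w) * cexp (phase s * RtoC u))%C.

Definition damped_cauchy_deriv (u : R) : C :=
  int_R (fun s => psi s / (RtoC s - w) * (phase s * cexp (phase s * RtoC u)))%C.

Lemma half_plane_Im : Im w = sg * y.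
Proof. rewrite <- Hwy, <- Rmult_assoc, Hsg. ring. Qed.

Lemma half_plane_Im_neq0 : Im w <> 0.
Proof. intros H. rewrite H, Rmult_0_r in Hwy. lra. Qed.

Lemma half_plane_Rabs_sign : Rabs sg = 1.
Proof.
  assert (H : Rabs sg * Rabs sg = 1) by (rewrite <- Rabs_mult, Hsg; apply Rabs_R1).
  generalize (Rabs_pos sg). nra.
Qed.

Lemma Re_phase s : Re (phase s) = - (2 * PI * y).
Proof. unfold phase. rewrite <- Hwy. destruct w as [p q]. simpl. ring. Qed.

Lemma Cmod_phase s : Cmod (phase s) = 2 * PI * Cmod (RtoC s - w)%C.
Proof.
  unfold phase. rewrite Cmod_mult. f_equal. unfold Cmod. simpl.
  replace (_ + _) with ((2 * PI) ^ 2)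
    by (transitivity ((2 * PI) ^ 2 * (sg * sg)); [rewrite Hsg | ]; ring).
  apply sqrt_pow2. generalize PI_RGT_0. lra.
Qed.

Lemma Cmod_cexp_phase s u : Cmod (cexp (phase s * RtoC u)) = exp (- (2 * PI * y) * u).
Proof. rewrite Cmod_cexp_scal, Re_phase. reflexivity. Qed.

Lemma Ccontinuous_phase : Ccontinuous phase.
Proof.
  apply (Ccontinuous_mult (fun _ => (0, - (2 * PI * sg))%R) (fun s => RtoC s - w)%C);
    [apply Ccontinuous_const |].
  apply (Ccontinuous_minus (fun s => RtoC s) (fun _ => w));
    [apply Ccontinuous_RtoC; intros; apply continuous_id | apply Ccontinuous_const].
Qed.

Lemma Ccontinuous_cexp_phase u : Ccontinuous (fun s => cexp (phase s * RtoC u)).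
Proof.
  apply Ccontinuous_cexp, (Ccontinuous_mult phase (fun _ => RtoC u));
    [apply Ccontinuous_phase | apply Ccontinuous_const].
Qed.

Lemma sq_decay_damped_integrand u :
  sq_decay (fun s => psi s / (RtoC s - w) * cexp (phase s * RtoC u))%C.
Proof.
  apply (sq_decay_mult_bounded _ _ (exp (- (2 * PI * y) * u))).
  - apply sq_decay_div_sub; [apply rapid_decay_sq_decay, Hpsi | apply half_plane_Im_neq0].
  - apply Ccontinuous_cexp_phase.
  - intros s. rewrite Cmod_cexp_phase. apply Rle_refl.
Qed.

Lemma damped_cauchy_0 : damped_cauchy 0 = cauchy_transform psi w.
Proof.
  unfold damped_cauchy, cauchy_transform. apply int_R_ext. intros s.
  rewrite cexp_scal, !Rmult_0_r, exp_0, cos_0, sin_0. apply injective_projections; simpl; ring.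
Qed.

Lemma phase_shift s u :
  cexp (phase s * RtoC u) = (cexp (phase 0 * RtoC u) * cexpi (- (2 * PI * s * (sg * u))))%C.
Proof.
  rewrite cexpi_cexp, <- cexp_plus. f_equal. unfold phase. destruct w as [p q].
  apply injective_projections; simpl; ring.
Qed.

Lemma damped_deriv_integrand_eq s u :
  (psi s / (RtoC s - w) * (phase s * cexp (phase s * RtoC u)))%C =
  ((0, - (2 * PI * sg))%R * cexp (phase 0 * RtoC u)
   * (psi s * cexpi (- (2 * PI * s * (sg * u)))))%C.
Proof.
  rewrite (phase_shift s u). change (phase s) with ((0, - (2 * PI * sg))%R * (RtoC s - w))%C.
  field. apply sub_neq0, half_plane_Im_neq0.
Qed.

Lemma sq_decay_damped_deriv_integrand u :
  sq_decay (fun s => psi s / (RtoC s - w) * (phase s * cexp (phase s * RtoC u)))%C.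
Proof.
  apply (sq_decay_ext _ _ (fun s => eq_sym (damped_deriv_integrand_eq s u))).
  apply sq_decay_Cmult, sq_decay_fourier_integrand, rapid_decay_sq_decay, Hpsi.
Qed.

Lemma damped_cauchy_deriv_eq u :
  damped_cauchy_deriv u =
  ((0, - (2 * PI * sg))%R * cexp (phase 0 * RtoC u) * fourier psi (sg * u))%C.
Proof.
  unfold damped_cauchy_deriv, fourier.
  rewrite <- (int_R_Cmult _ _
               (sq_decay_fourier_integrand psi (sg * u) (rapid_decay_sq_decay psi Hpsi))).
  apply int_R_ext. intros s. apply damped_deriv_integrand_eq.
Qed.

Lemma damped_cauchy_deriv_eq0 d u : (forall xi, Rabs xi < d -> fourier psi xi = 0%C) ->
  0 <= u < d -> damped_cauchy_deriv u = 0%C.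
Proof.
  intros Hd Hu. rewrite damped_cauchy_deriv_eq, Hd; [ring |].
  rewrite Rabs_mult, half_plane_Rabs_sign, Rabs_pos_eq; lra.
Qed.

Lemma damped_integrand_taylor2 s u h : 0 <= u -> Rabs h <= 1 ->
  Cmod (psi s / (RtoC s - w) * (cexp (phase s * RtoC (u + h)) - cexp (phase s * RtoC u)
        - RtoC h * (phase s * cexp (phase s * RtoC u))))%C
  <= 8 * PI ^ 2 * exp (2 * PI * y) * h ^ 2 * ((Rabs s + Cmod w) * Cmod (psi s)).
Proof.
  intros Hu Hh. assert (HPi := PI_RGT_0).
  assert (Hnz := sub_neq0 w s half_plane_Im_neq0). assert (Hq := proj1 (Cmod_gt_0 _) Hnz).
  rewrite Cmod_mult, Cmod_div by exact Hnz.
  eapply Rle_trans; [apply Rmult_le_compat_l; [apply Rdiv_le_0_compat; [apply Cmod_ge_0 | lra] |];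
                     apply cexp_taylor2, Hh |].
  rewrite Cmod_phase, Re_phase, Rabs_Ropp, Rabs_pos_eq by nra.
  assert (Hexp : exp (- (2 * PI * y) * u + 2 * PI * y) <= exp (2 * PI * y))
    by (apply exp_le_compat; assert (0 <= PI * y * u) by (apply Rmult_le_pos; nra); lra).
  assert (Hw := Cmod_sub_le w s). assert (H0 := Cmod_ge_0 (psi s)). assert (Hh2 := pow2_ge_0 h).
  replace (Cmod (psi s) / Cmod (RtoC s - w)%C
           * (2 * (2 * PI * Cmod (RtoC s - w)%C) ^ 2 * exp (- (2 * PI * y) * u + 2 * PI * y)
              * h ^ 2))
    with (8 * PI ^ 2 * h ^ 2 * (Cmod (RtoC s - w)%C * Cmod (psi s))
          * exp (- (2 * PI * y) * u + 2 * PI * y))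
    by (field; lra).
  replace (8 * PI ^ 2 * exp (2 * PI * y) * h ^ 2 * ((Rabs s + Cmod w) * Cmod (psi s)))
    with (8 * PI ^ 2 * h ^ 2 * ((Rabs s + Cmod w) * Cmod (psi s)) * exp (2 * PI * y)) by ring.
  apply Rmult_le_compat; [| apply Rlt_le, exp_pos | | exact Hexp].
  - apply Rmult_le_pos; [nra | apply Rmult_le_pos; [apply Cmod_ge_0 | exact H0]].
  - apply Rmult_le_compat_l; [nra |]. apply Rmult_le_compat_r; assumption.
Qed.

Lemma damped_cauchy_taylor2 : exists K, forall u h, 0 <= u -> Rabs h <= 1 ->
  Cmod (damped_cauchy (u + h) - damped_cauchy u - RtoC h * damped_cauchy_deriv u)%C <= K * h ^ 2.
Proof.
  destruct (sq_decay_xpow_mul 0 psi Hpsi) as [_ [M0 HM0]].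
  destruct (sq_decay_xpow_mul 1 psi Hpsi) as [_ [M1 HM1]].
  set (E := 8 * PI ^ 2 * exp (2 * PI * y)).
  exists (PI * (E * (M1 + Cmod w * M0))). intros u h Hu Hh.
  replace (PI * (E * (M1 + Cmod w * M0)) * h ^ 2) with (PI * (E * h ^ 2 * (M1 + Cmod w * M0)))
    by ring.
  apply Cmod_int_R_taylor;
    [apply sq_decay_damped_integrand | apply sq_decay_damped_integrand |
     apply sq_decay_damped_deriv_integrand |].
  intros s. cbv beta.
  match goal with |- Cmod ?e * _ <= _ =>
    replace e with (psi s / (RtoC s - w) * (cexp (phase s * RtoC (u + h)) - cexp (phase s * RtoC u)
                    - RtoC h * (phase s * cexp (phase s * RtoC u))))%C by (unfold Cdiv; ring)
  end.
  assert (HE : 0 <= E * h ^ 2).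
  { unfold E. apply Rmult_le_pos; [| apply pow2_ge_0].
    apply Rmult_le_pos; [generalize PI_RGT_0; nra | apply Rlt_le, exp_pos]. }
  specialize (HM0 s). specialize (HM1 s). unfold xpow_mul in HM0, HM1.
  rewrite Cmod_mult, Cmod_R, pow_O, Rabs_R1, Rmult_1_l in HM0.
  rewrite Cmod_mult, Cmod_R, pow_1 in HM1.
  apply Rle_trans with (E * h ^ 2 * ((Rabs s + Cmod w) * Cmod (psi s)) * (1 + s ^ 2)).
  - apply Rmult_le_compat_r; [nra |]. apply damped_integrand_taylor2; assumption.
  - replace (E * h ^ 2 * ((Rabs s + Cmod w) * Cmod (psi s)) * (1 + s ^ 2))
      with (E * h ^ 2 * (Rabs s * Cmod (psi s) * (1 + s ^ 2)
                         + Cmod w * (Cmod (psi s) * (1 + s ^ 2))))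
      by ring.
    apply Rmult_le_compat_l; [exact HE |].
    generalize (Cmod_ge_0 w). nra.
Qed.

Lemma Cmod_damped_integrand_le Mq u s :
  (forall s, Cmod (psi s) ^ 2 * (1 + s ^ 2) <= Mq) ->
  Cmod (psi s / (RtoC s - w) * cexp (phase s * RtoC u))%C
  <= exp (- (2 * PI * y) * u) / 2 * (Mq / (1 + s ^ 2) / sqrt y + sqrt y / ((s - Re w) ^ 2 + y ^ 2)).
Proof.
  intros HMq. assert (Ht : 0 < sqrt y) by (apply sqrt_lt_R0, Hy).
  assert (Hnz := sub_neq0 w s half_plane_Im_neq0). assert (Hq := proj1 (Cmod_gt_0 _) Hnz).
  assert (Hq2 : Cmod (RtoC s - w)%C ^ 2 = (s - Re w) ^ 2 + y ^ 2).
  { rewrite Cmod_sub_sq, half_plane_Im. transitivity ((s - Re w) ^ 2 + (sg * sg) * y ^ 2); [ring |].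
    rewrite Hsg. ring. }
  assert (Hs : 0 < 1 + s ^ 2) by (generalize (pow2_ge_0 s); lra).
  assert (Hpsi2 : Cmod (psi s) ^ 2 <= Mq / (1 + s ^ 2)).
  { apply Rmult_le_reg_r with (1 + s ^ 2); [exact Hs |].
    unfold Rdiv. rewrite Rmult_assoc, Rinv_l, Rmult_1_r by lra. apply HMq. }
  rewrite Cmod_mult, Cmod_div, Cmod_cexp_phase, <- Hq2 by exact Hnz.
  set (e := exp (- (2 * PI * y) * u)). assert (He : 0 < e) by apply exp_pos.
  set (q := Cmod (RtoC s - w)%C) in *.
  apply Rle_trans with (e * ((Cmod (psi s) ^ 2 / sqrt y + sqrt y / q ^ 2) / 2)).
  - rewrite Rmult_comm. apply Rmult_le_compat_l; [lra |].
    apply amgm_div; [apply Cmod_ge_0 | exact Hq | exact Ht].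
  - replace (e / 2 * (Mq / (1 + s ^ 2) / sqrt y + sqrt y / q ^ 2))
      with (e * ((Mq / (1 + s ^ 2) / sqrt y + sqrt y / q ^ 2) / 2)) by (field; repeat split; lra).
    apply Rmult_le_compat_l; [lra |]. apply Rmult_le_compat_r; [lra |]. apply Rplus_le_compat_r.
    apply Rmult_le_compat_r; [apply Rlt_le, Rinv_0_lt_compat, Ht | exact Hpsi2].
Qed.

(* AM-GM with weight [sqrt y] splits [|psi s| / |s - w|] into two integrable majorants, of
   integrals at most [Mq pi / sqrt y] and [sqrt y * pi / y]. *)
Lemma Cmod_damped_cauchy_le Mq u :
  (forall s, Cmod (psi s) ^ 2 * (1 + s ^ 2) <= Mq) ->
  Cmod (damped_cauchy u) <= exp (- (2 * PI * y) * u) * ((Mq + 1) * PI) / (2 * sqrt y).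
Proof.
  intros HMq.
  assert (HMq0 : 0 <= Mq) by (generalize (HMq 0) (pow2_ge_0 (Cmod (psi 0))); simpl; nra).
  assert (Ht : 0 < sqrt y) by (apply sqrt_lt_R0, Hy).
  assert (Htt : sqrt y * sqrt y = y) by (apply sqrt_sqrt; lra).
  set (t := sqrt y) in *. set (e := exp (- (2 * PI * y) * u)). assert (He : 0 < e) by apply exp_pos.
  apply Cmod_int_R_le; [apply sq_decay_damped_integrand |]. intros a b Hab.
  eapply Rle_trans.
  - apply (Cmod_RInt_le_antiderivative _
      (fun s => e / 2 * (Mq / (1 + s ^ 2) / t + t / ((s - Re w) ^ 2 + y ^ 2)))
      (fun s => e / 2 * (Mq * atan s / t + t / y * atan ((s - Re w) / y))));
      [exact Hab | apply sq_decay_damped_integrand |].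
    intros s _.
    assert (0 < (s - Re w) ^ 2 + y ^ 2) by (generalize (pow2_ge_0 (s - Re w)) (pow_lt y 2 Hy); lra).
    split; [| split].
    + auto_derive; [repeat split; nra |]. rewrite <- Htt. field. repeat split; nra.
    + apply (ex_derive_continuous (K := R_AbsRing) (V := R_NormedModule)).
      auto_derive. repeat split; nra.
    + apply Cmod_damped_integrand_le, HMq.
  - generalize (atan_bound a) (atan_bound b)
      (atan_bound ((a - Re w) / y)) (atan_bound ((b - Re w) / y)).
    intros Ha Hb Ha' Hb'.
    replace (e * ((Mq + 1) * PI) / (2 * t)) with (e / 2 * (Mq / t * PI + t / y * PI))
      by (rewrite <- Htt; field; lra).
    cbv beta. match goal with |- ?l <= _ =>
      replace l with (e / 2 * (Mq / t * (atan b - atan a)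
                               + t / y * (atan ((b - Re w) / y) - atan ((a - Re w) / y))))
        by (unfold Rdiv; ring)
    end.
    apply Rmult_le_compat_l; [lra |].
    apply Rplus_le_compat; apply Rmult_le_compat_l;
      try (apply Rdiv_le_0_compat; lra); lra.
Qed.

Lemma Cmod_cauchy_transform_le d Mq : 0 < d ->
  (forall xi, Rabs xi < d -> fourier psi xi = 0%C) ->
  (forall s, Cmod (psi s) ^ 2 * (1 + s ^ 2) <= Mq) ->
  Cmod (cauchy_transform psi w) <= exp (- (2 * PI * d * y)) * ((Mq + 1) * PI) / (2 * sqrt y).
Proof.
  intros Hd Hvan HMq. destruct damped_cauchy_taylor2 as [K HK].
  rewrite <- damped_cauchy_0, <- (eq_of_sq_increments damped_cauchy K d Hd).
  - replace (- (2 * PI * d * y)) with (- (2 * PI * y) * d) by ring.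
    apply Cmod_damped_cauchy_le, HMq.
  - intros u h Hu Hh. specialize (HK u h (proj1 Hu) ltac:(rewrite Rabs_pos_eq; lra)).
    rewrite (damped_cauchy_deriv_eq0 d u Hvan Hu) in HK.
    replace (damped_cauchy (u + h) - damped_cauchy u - RtoC h * 0)%C
      with (damped_cauchy (u + h) - damped_cauchy u)%C in HK by ring.
    exact HK.
Qed.

End HalfPlane.

(** * Polynomially weighted Poisson integrals *)

Lemma cauchy_transform_decay (psi : R -> C) d : rapid_decay psi -> 0 < d ->
  (forall xi, Rabs xi < d -> fourier psi xi = 0%C) ->
  exists K, 0 <= K /\ forall (w : C) sg y, sg * sg = 1 -> sg * Im w = y -> 0 < y ->
    Cmod (cauchy_transform psi w) <= K * (exp (- (2 * PI * d * y)) / sqrt y).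
Proof.
  intros Hpsi Hd Hvan.
  destruct (proj2 Hpsi 0%nat) as [B HB]. destruct (rapid_decay_sq_decay psi Hpsi) as [_ [M HM]].
  assert (HB0 : 0 <= B) by (generalize (HB 0) (Cmod_ge_0 (psi 0)); simpl; lra).
  assert (HM0 := sq_bounded_ge0 psi M HM).
  assert (HBM : 0 <= B * M) by (apply Rmult_le_pos; assumption).
  exists ((B * M + 1) * PI / 2).
  split; [generalize PI_RGT_0; intros; unfold Rdiv; apply Rmult_le_pos; [nra | lra] |].
  intros w sg y Hsg Hwy Hy.
  eapply Rle_trans;
    [apply (Cmod_cauchy_transform_le psi w sg y Hpsi Hsg Hwy Hy d (B * M) Hd Hvan) |].
  - intros s. specialize (HB s). specialize (HM s). simpl in HB. rewrite Rmult_1_r in HB.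
    assert (H0 := Cmod_ge_0 (psi s)).
    replace (Cmod (psi s) ^ 2 * (1 + s ^ 2)) with (Cmod (psi s) * (Cmod (psi s) * (1 + s ^ 2)))
      by ring.
    apply Rmult_le_compat; [exact H0 | generalize (pow2_ge_0 s); nra | exact HB | exact HM].
  - right. field. apply Rgt_not_eq, sqrt_lt_R0, Hy.
Qed.

Lemma Cmod_Re_pow_cauchy_transform (psi : R -> C) (w : C) k : rapid_decay psi -> Im w <> 0 ->
  (forall j, int_R (xpow_mul j psi) = 0%C) ->
  Cmod (RtoC (Re w ^ k) * cauchy_transform psi w)%C <= Cmod (cauchy_transform (xpow_mul k psi) w).
Proof.
  intros Hpsi Hw Hmom.
  rewrite <- (cauchy_transform_pow psi w Hpsi Hw Hmom k), !Cmod_mult, Cmod_R, Cmod_pow.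
  apply Rmult_le_compat_r; [apply Cmod_ge_0 |].
  rewrite <- RPow_abs. apply pow_incr. split; [apply Rabs_pos | apply re_le_Cmod].
Qed.

Lemma Cmod_mul_conv_poisson_le (phi : R -> C) (c : C) y x : sq_decay phi -> 0 < y ->
  Cmod (c * conv_poisson phi y x)%C
  <= (Cmod (c * cauchy_transform phi (x, y)%R) + Cmod (c * cauchy_transform phi (x, - y)%R))
     / (2 * PI).
Proof.
  intros Hphi Hy. assert (HPi := PI_RGT_0).
  rewrite conv_poisson_cauchy by assumption. set (F := cauchy_transform phi).
  replace (c * (/ (0, 2 * PI)%R * (F (x, y)%R - F (x, - y)%R)))%C
    with (/ (0, 2 * PI)%R * (c * F (x, y)%R - c * F (x, - y)%R))%C by ring.
  assert (Hc : Cmod (0, 2 * PI)%R = 2 * PI).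
  { unfold Cmod. simpl. replace (_ + _) with ((2 * PI) ^ 2) by ring. apply sqrt_pow2. lra. }
  rewrite Cmod_mult, Cmod_inv, Hc by (intros H; rewrite H, Cmod_0 in Hc; lra).
  rewrite Rmult_comm. apply Rmult_le_compat_r; [apply Rlt_le, Rinv_0_lt_compat; lra |].
  unfold Cminus. rewrite <- (Cmod_opp (c * F (x, - y)%R)). apply Cmod_triangle.
Qed.

Lemma monomial_conv_poisson_decay (phi : R -> C) d : rapid_decay phi -> 0 < d ->
  (forall xi, Rabs xi < d -> fourier phi xi = 0%C) ->
  forall k : nat, exists K, 0 <= K /\ forall x y, 0 < y ->
    Cmod (RtoC (x ^ k) * conv_poisson phi y x)%C <= K * (exp (- (2 * PI * d * y)) / sqrt y).
Proof.
  intros Hphi Hd Hvan k. assert (HPi := PI_RGT_0).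
  assert (Hmom : forall j, int_R (xpow_mul j phi) = 0%C).
  { intros j. rewrite int_R_eq_fourier0. apply (fourier_xpow_mul_eq0 phi d Hphi Hvan).
    rewrite Rabs_R0. exact Hd. }
  destruct (cauchy_transform_decay (xpow_mul k phi) d (rapid_decay_xpow_mul k phi Hphi) Hd
              (fourier_xpow_mul_eq0 phi d Hphi Hvan k)) as [K [HK0 HK]].
  exists (K / PI). split; [apply Rdiv_le_0_compat; lra |].
  intros x y Hy. set (E := exp (- (2 * PI * d * y)) / sqrt y) in *.
  assert (Hhalf : forall (w : C) sg, sg * sg = 1 -> Re w = x -> sg * Im w = y ->
            Cmod (RtoC (x ^ k) * cauchy_transform phi w)%C <= K * E).
  { intros w sg Hsg Hx Hwy. rewrite <- Hx.
    eapply Rle_trans; [apply Cmod_Re_pow_cauchy_transform; [exact Hphi | | exact Hmom] |].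
    - intros H. rewrite H in Hwy. lra.
    - apply (HK w sg y Hsg Hwy Hy). }
  assert (H1 := Hhalf (x, y)%R 1 ltac:(ring) eq_refl ltac:(simpl; ring)).
  assert (H2 := Hhalf (x, - y)%R (-1) ltac:(ring) eq_refl ltac:(simpl; ring)).
  eapply Rle_trans;
    [apply Cmod_mul_conv_poisson_le; [apply rapid_decay_sq_decay, Hphi | exact Hy] |].
  replace (K / PI * E) with ((K * E + K * E) / (2 * PI)) by (field; lra).
  unfold Rdiv. apply Rmult_le_compat_r; [apply Rlt_le, Rinv_0_lt_compat; lra | lra].
Qed.

Lemma poly_conv_poisson_decay (phi : R -> C) (a : nat -> C) d : rapid_decay phi -> 0 < d ->
  (forall xi, Rabs xi < d -> fourier phi xi = 0%C) ->
  forall n, exists K, 0 <= K /\ forall x y, 0 < y ->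
    Cmod (poly_eval a n x * conv_poisson phi y x)%C <= K * (exp (- (2 * PI * d * y)) / sqrt y).
Proof.
  intros Hphi Hd Hvan.
  assert (Hterm : forall k, exists K, 0 <= K /\ forall x y, 0 < y ->
            Cmod (a k * RtoC (x ^ k) * conv_poisson phi y x)%C
            <= K * (exp (- (2 * PI * d * y)) / sqrt y)).
  { intros k. destruct (monomial_conv_poisson_decay phi d Hphi Hd Hvan k) as [K [HK0 HK]].
    exists (Cmod (a k) * K). split; [apply Rmult_le_pos; [apply Cmod_ge_0 | exact HK0] |].
    intros x y Hy. rewrite <- Cmult_assoc, Cmod_mult, Rmult_assoc.
    apply Rmult_le_compat_l; [apply Cmod_ge_0 | apply HK, Hy]. }
  induction n as [| n [K [HK0 HK]]].
  - destruct (Hterm 0%nat) as [K [HK0 HK]]. exists K. split; [exact HK0 |].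
    intros x y Hy. unfold poly_eval. rewrite sum_O. apply HK, Hy.
  - destruct (Hterm (S n)) as [K1 [HK10 HK1]]. exists (K + K1). split; [lra |].
    intros x y Hy. unfold poly_eval. rewrite sum_Sn. fold (poly_eval a n x).
    change (plus ?u ?v) with (Cplus u v). rewrite Cmult_plus_distr_r.
    eapply Rle_trans; [apply Cmod_triangle |].
    generalize (HK x y Hy) (HK1 x y Hy). lra.
Qed.

Theorem lemma10 (phi : R -> C) (a : nat -> C) (n : nat) (d : R) :
  is_schwartz phi ->
  dist_to_0 (support (fourier phi)) d ->
  0 < d ->
  a n <> 0%C ->
  exists K : R, 0 < K /\
    forall x y : R, 0 < y ->
      Cmod (Cmult (poly_eval a n x) (conv_poisson phi y x))
        <= K * (1 + y ^ n) * (exp (- (2 * PI * d * y)) / sqrt y).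
Proof.
  intros Hsch Hdist Hd _.
  destruct (poly_conv_poisson_decay phi a d (schwartz_rapid_decay phi Hsch) Hd
              (fourier_eq0_of_dist_support phi d Hdist) n) as [K [HK0 HK]].
  exists (K + 1). split; [lra |].
  intros x y Hy. eapply Rle_trans; [apply HK, Hy |].
  apply Rmult_le_compat_r.
  - apply Rmult_le_pos; [apply Rlt_le, exp_pos | apply Rlt_le, Rinv_0_lt_compat, sqrt_lt_R0, Hy].
  - generalize (pow_le y n (Rlt_le _ _ Hy)). nra.
Qed.
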